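(* Let $a<b$, $c<d$, and let $f:[a,b]\times[c,d]\to\mathbb{R}$ be convex on the coordinates. Let $n\in\mathbb{N}$ and set $x_k=a+k\frac{b-a}{n}$ and $y_k=c+k\frac{d-c}{n}$ for $k=0,1,\dots,n$. Then \begin{align*} &\frac{d-c}{2n}\sum_{k=1}^{n}\int_a^b f\Big(x, \frac{y_{k-1}+y_k}{2}\Big)dx + \frac{b-a}{2n}\sum_{k=1}^{n}\int_c^d f\Big(\frac{x_{k-1}+x_k}{2}, y\Big)dy\\ &\leq \int_a^b\int_c^d f(x, y)\,dx\,dy\\ &\leq \frac{d-c}{4n}\int_a^b \left[f(x, c) + f(x, d)\right] dx + \frac{b-a}{4n}\int_c^d \left[f(a, y) + f(b, y)\right] dy\\ &\quad+ \frac{d-c}{2n}\sum_{k=1}^{n-1}\int_a^b f(x, y_k)\,dx + \frac{b-a}{2n}\sum_{k=1}^{n-1}\int_c^d f(x_k, y)\,dy. \end{align*}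
   Context: A function $f:[a,b]\times[c,d]\to\mathbb{R}$ is called convex on the coordinates if for every $y\in[c,d]$ the partial map $u\mapsto f(u,y)$ is convex on $[a,b]$, and for every $x\in[a,b]$ the partial map $v\mapsto f(x,v)$ is convex on $[c,d]$. Empty sums (e.g. $\sum_{k=1}^{0}$) are zero. *)

From Stdlib Require Import Reals ClassicalEpsilon.
Open Scope R_scope.

Definition convex_on (a b : R) (g : R -> R) : Prop :=
  forall u v t, a <= u <= b -> a <= v <= b -> 0 <= t <= 1 ->
    g (t * u + (1 - t) * v) <= t * g u + (1 - t) * g v.

Definition convex_on_coordinates (a b c d : R) (f : R -> R -> R) : Prop :=
  (forall y, c <= y <= d -> convex_on a b (fun u => f u y)) /\
  (forall x, a <= x <= b -> convex_on c d (fun v => f x v)).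

(* Total Riemann integral: the Stdlib RiemannInt when g is Riemann integrable
   on [a,b] (the value does not depend on the integrability witness), 0 otherwise. *)
Definition Rint (g : R -> R) (a b : R) : R :=
  match excluded_middle_informative (inhabited (Riemann_integrable g a b)) with
  | left h => RiemannInt (epsilon h (fun _ => True))
  | right _ => 0
  end.

Fixpoint sumk (m : nat) (g : nat -> R) : R :=
  match m with
  | O => 0
  | S m' => sumk m' g + g (S m')
  end.

(* Hermite-Hadamard: a convex g on [p, q] satisfies
   (q - p) g((p + q) / 2) <= int_p^q g <= (q - p) (g p + g q) / 2, since pairing x with
   p + q - x brings the midpoint below and the chord above.  Summed over the cells of
   the uniform grid this bounds int g between a midpoint sum and a trapezoid sum.
   For f convex on the coordinates, apply it in y to f(x, .) for each fixed x and
   integrate in x, and apply it in x to the convex function x |-> int_c^d f(x, y) dy: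
   this gives two bounds on the double integral, whose average is the theorem.
   Every integral involved exists because a convex function on a compact interval is
   bounded, and continuous in the interior. *)

From Stdlib Require Import Reals Lra Lia ClassicalEpsilon.
From Coquelicot Require Import Coquelicot.
Open Scope R_scope.

Lemma IsStepFun_open_const (f : R -> R) (a b v : R) :
  a <= b -> (forall x, a < x < b -> f x = v) -> IsStepFun f a b.
Proof.
  intros Hab Hf.
  exists (a :: b :: nil)%list, (v :: nil)%list.
  repeat split.
  - intros i Hi; simpl in Hi; destruct i; simpl; [lra | lia].
  - simpl; rewrite Rmin_left; auto.
  - simpl; rewrite Rmax_right; auto.
  - intros i Hi; simpl in Hi; destruct i; [|lia].
    intros x Hx; apply Hf; exact Hx.
Qed.

Lemma RiemannInt_SF_open_const (a b v : R) (f : StepFun a b) :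
  a <= b -> (forall x, a < x < b -> f x = v) -> RiemannInt_SF f = v * (b - a).
Proof.
  intros Hab Hf.
  rewrite <- (StepFun_P18 a b v).
  apply Rle_antisym; apply StepFun_P37; auto;
    intros x Hx; rewrite Hf by exact Hx; apply Rle_refl.
Qed.

Lemma StepFun_outside (a b c d C : R) : a <= c -> c <= d -> d <= b ->
  {psi : StepFun a b | (forall x, c <= x <= d -> psi x = 0) /\
                       (forall x, x < c \/ d < x -> psi x = C) /\
                       RiemannInt_SF psi = C * ((c - a) + (b - d))}.
Proof.
  intros Hac Hcd Hdb.
  set (psi := fun x => if Rle_dec c x then if Rle_dec x d then 0 else C else C).
  assert (psi_in : forall x, c <= x <= d -> psi x = 0).
  { intros x Hx; unfold psi.
    destruct (Rle_dec c x); [destruct (Rle_dec x d)|]; [reflexivity | lra ..]. }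
  assert (psi_out : forall x, x < c \/ d < x -> psi x = C).
  { intros x Hx; unfold psi.
    destruct (Rle_dec c x); [destruct (Rle_dec x d)|]; [lra | reflexivity ..]. }
  assert (Pl : IsStepFun psi a c)
    by (apply IsStepFun_open_const with C; [|intros; apply psi_out]; lra).
  assert (Pm : IsStepFun psi c d)
    by (apply IsStepFun_open_const with 0; [|intros; apply psi_in]; lra).
  assert (Pr : IsStepFun psi d b)
    by (apply IsStepFun_open_const with C; [|intros; apply psi_out]; lra).
  pose (Pmr := StepFun_P46 Pm Pr).
  exists (mkStepFun (StepFun_P46 Pl Pmr)); repeat split; [exact psi_in | exact psi_out|].
  rewrite <- (StepFun_P43 Pl Pmr), <- (StepFun_P43 Pm Pr).
  rewrite (RiemannInt_SF_open_const a c C (mkStepFun Pl)),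
    (RiemannInt_SF_open_const c d 0 (mkStepFun Pm)),
    (RiemannInt_SF_open_const d b C (mkStepFun Pr)); try lra.
  - intros x Hx; apply psi_out; lra.
  - intros x Hx; apply psi_in; lra.
  - intros x Hx; apply psi_out; lra.
Qed.

Lemma Riemann_integrable_clamp (g : R -> R) (a b c d : R) :
  a <= c -> c <= d -> d <= b -> Riemann_integrable g c d ->
  Riemann_integrable (fun x => g (Rmax c (Rmin x d))) a b.
Proof.
  intros Hac Hcd Hdb Hint.
  apply RiemannInt_P21 with d; [lra .. | |].
  - apply RiemannInt_P21 with c; [lra .. | |].
    + apply Riemann_integrable_ext with (fct_cte (g c)); [|apply RiemannInt_P14].
      intros x Hx; rewrite Rmin_left, Rmax_right in Hx by lra.
      unfold fct_cte; rewrite Rmin_left, Rmax_left by lra; reflexivity.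
    + apply Riemann_integrable_ext with g; [|exact Hint].
      intros x Hx; rewrite Rmin_left, Rmax_right in Hx by lra.
      rewrite Rmin_left, Rmax_right by lra; reflexivity.
  - apply Riemann_integrable_ext with (fct_cte (g d)); [|apply RiemannInt_P14].
    intros x Hx; rewrite Rmin_left, Rmax_right in Hx by lra.
    unfold fct_cte; rewrite Rmin_right, Rmax_right by lra; reflexivity.
Qed.

Lemma Riemann_integrable_approx (g : R -> R) (a b : R) :
  (forall eps : posreal, {h : R -> R & (Riemann_integrable h a b *
     {psi : StepFun a b |
        (forall t, Rmin a b <= t <= Rmax a b -> Rabs (g t - h t) <= psi t) /\
        Rabs (RiemannInt_SF psi) < eps})%type}) ->
  Riemann_integrable g a b.
Proof.
  intros Happrox eps.
  assert (Heps2 : 0 < eps / 2) by (destruct eps; simpl; lra).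
  destruct (Happrox (mkposreal _ Heps2)) as [h [Ih [psi [Hpsi Ipsi]]]].
  destruct (Ih (mkposreal _ Heps2)) as [phi [psi' [Hphi Ipsi']]].
  simpl in Ipsi, Ipsi'.
  exists phi, (mkStepFun (StepFun_P28 1 psi psi')); split.
  - intros t Ht; simpl.
    replace (g t - phi t) with ((g t - h t) + (h t - phi t)) by ring.
    eapply Rle_trans; [apply Rabs_triang|].
    pose proof (Hpsi t Ht); pose proof (Hphi t Ht); lra.
  - rewrite StepFun_P30, Rmult_1_l.
    eapply Rle_lt_trans; [apply Rabs_triang | lra].
Qed.

Lemma Riemann_integrable_bounded_interior (g : R -> R) (a b M : R) :
  a < b -> (forall x, a <= x <= b -> Rabs (g x) <= M) ->
  (forall c d, a < c -> c <= d -> d < b -> Riemann_integrable g c d) ->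
  Riemann_integrable g a b.
Proof.
  intros Hab HM Hint.
  apply Riemann_integrable_approx; intros eps.
  set (C := 2 * (Rabs M + 1)).
  assert (HC : 0 < C) by (unfold C; pose proof (Rabs_pos M); lra).
  set (dl := Rmin ((b - a) / 3) (eps / (4 * C))).
  assert (Hdl : 0 < dl).
  { apply Rmin_pos; [lra|]. destruct eps as [e He]; simpl.
    apply Rdiv_lt_0_compat; lra. }
  assert (Hdl3 : dl <= (b - a) / 3) by apply Rmin_l.
  assert (HCdl : C * dl <= eps / 4).
  { apply Rle_trans with (C * (eps / (4 * C))).
    - apply Rmult_le_compat_l; [lra | apply Rmin_r].
    - right; field; lra. }
  set (c := a + dl); set (d := b - dl).
  assert (Hc : c - a = dl /\ b - d = dl /\ c < d) by (unfold c, d; lra).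
  (* Freezing [g] outside [c, d] changes it only on a set of length [2 dl],
     where the difference is at most [C]. *)
  exists (fun x => g (Rmax c (Rmin x d))); split.
  { apply Riemann_integrable_clamp; [lra .. | apply Hint; lra]. }
  destruct (StepFun_outside a b c d C) as [psi [psi_in [psi_out Ipsi]]]; [lra .. |].
  exists psi; split.
  - intros t Ht; rewrite Rmin_left, Rmax_right in Ht by lra.
    assert (Hk : a <= Rmax c (Rmin t d) <= b).
    { split; [apply Rle_trans with c; [lra | apply Rmax_l]|].
      apply Rmax_lub; [lra | apply Rle_trans with d; [apply Rmin_r | lra]]. }
    assert (Hdiff : Rabs (g t - g (Rmax c (Rmin t d))) <= C).
    { unfold Rminus; eapply Rle_trans; [apply Rabs_triang | rewrite Rabs_Ropp].
      pose proof (HM t Ht); pose proof (HM _ Hk); pose proof (Rle_abs M); unfold C; lra. }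
    destruct (Rle_lt_dec c t); [destruct (Rle_lt_dec t d)|].
    + rewrite psi_in, Rmin_left, Rmax_right by lra.
      unfold Rminus; rewrite Rplus_opp_r, Rabs_R0; lra.
    + rewrite psi_out by lra; exact Hdiff.
    + rewrite psi_out by lra; exact Hdiff.
  - rewrite Ipsi, Rabs_pos_eq; nra.
Qed.

Section Convex.

Variables (a b : R) (g : R -> R).
Hypothesis Hg : convex_on a b g.

Lemma convex_on_chord u v w :
  a <= u -> u < v -> v < w -> w <= b -> (w - u) * g v <= (w - v) * g u + (v - u) * g w.
Proof.
  intros Hu Huv Hvw Hw.
  set (t := (w - v) / (w - u)).
  assert (Ht : 0 <= t <= 1).
  { unfold t; split.
    - apply Rdiv_le_0_compat; lra.
    - apply Rmult_le_reg_r with (w - u); [lra|].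
      unfold Rdiv; rewrite Rmult_assoc, Rinv_l by lra; lra. }
  pose proof (Hg u w t ltac:(lra) ltac:(lra) Ht) as H.
  replace (t * u + (1 - t) * w) with v in H by (unfold t; field; lra).
  apply Rmult_le_compat_l with (r := w - u) in H; [|lra].
  replace ((w - u) * (t * g u + (1 - t) * g w)) with ((w - v) * g u + (v - u) * g w) in H
    by (unfold t; field; lra).
  exact H.
Qed.

Lemma convex_on_sub a' b' : a <= a' -> b' <= b -> convex_on a' b' g.
Proof. intros Ha Hb u v t Hu Hv Ht; apply Hg; auto; lra. Qed.

Lemma convex_on_bounded : exists M, forall x, a <= x <= b -> Rabs (g x) <= M.
Proof.
  set (U := Rabs (g a) + Rabs (g b)).
  assert (Hup : forall x, a <= x <= b -> g x <= U).
  { intros x Hx.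
    pose proof (Rle_abs (g a)); pose proof (Rle_abs (g b)).
    pose proof (Rabs_pos (g a)); pose proof (Rabs_pos (g b)).
    destruct (Req_dec x a) as [->|Hxa]; [unfold U; lra|].
    destruct (Req_dec x b) as [->|Hxb]; [unfold U; lra|].
    pose proof (convex_on_chord a x b ltac:(lra) ltac:(lra) ltac:(lra) ltac:(lra)).
    unfold U; nra. }
  set (m := (a + b) / 2).
  exists (2 * U + 2 * Rabs (g m)).
  intros x Hx.
  (* [g m] lies below the average of [g x] and [g (2 m - x)]. *)
  pose proof (Hg x (2 * m - x) (/ 2) Hx ltac:(unfold m; lra) ltac:(lra)) as Hmid.
  replace (/ 2 * x + (1 - / 2) * (2 * m - x)) with m in Hmid by field.
  pose proof (Hup x Hx); pose proof (Hup (2 * m - x) ltac:(unfold m; lra)).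
  pose proof (Rle_abs (g m)); pose proof (Rle_abs (- g m)); rewrite Rabs_Ropp in *.
  pose proof (Rabs_pos (g a)); pose proof (Rabs_pos (g b)).
  apply Rabs_le; unfold U in *; lra.
Qed.

Lemma convex_on_lipschitz_near x0 h x : 0 < h -> a <= x0 - h -> x0 + h <= b ->
  Rabs (x - x0) < h ->
  h * Rabs (g x - g x0)
    <= (Rabs (g (x0 + h) - g x0) + Rabs (g x0 - g (x0 - h))) * Rabs (x - x0).
Proof.
  intros Hh Ha Hb Hx.
  pose proof (Rle_abs (g (x0 + h) - g x0)); pose proof (Rle_abs (- (g (x0 + h) - g x0))).
  pose proof (Rle_abs (g x0 - g (x0 - h))); pose proof (Rle_abs (- (g x0 - g (x0 - h)))).
  rewrite !Rabs_Ropp in *.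
  rewrite <- (Rabs_pos_eq h) at 1 by lra; rewrite <- Rabs_mult.
  destruct (Rtotal_order x x0) as [Hlt|[->|Hgt]].
  - rewrite (Rabs_left (x - x0)) in * by lra.
    pose proof (convex_on_chord (x0 - h) x x0 ltac:(lra) ltac:(lra) ltac:(lra) ltac:(lra)).
    pose proof (convex_on_chord x x0 (x0 + h) ltac:(lra) ltac:(lra) ltac:(lra) ltac:(lra)).
    apply Rabs_le; split; nra.
  - unfold Rminus; rewrite !Rplus_opp_r, Rmult_0_r, !Rabs_R0; lra.
  - rewrite (Rabs_right (x - x0)) in * by lra.
    pose proof (convex_on_chord x0 x (x0 + h) ltac:(lra) ltac:(lra) ltac:(lra) ltac:(lra)).
    pose proof (convex_on_chord (x0 - h) x0 x ltac:(lra) ltac:(lra) ltac:(lra) ltac:(lra)).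
    apply Rabs_le; split; nra.
Qed.

Lemma convex_on_continuity_pt x0 : a < x0 < b -> continuity_pt g x0.
Proof.
  intros Hx0.
  set (h := Rmin (x0 - a) (b - x0)).
  assert (Hh : 0 < h) by (apply Rmin_pos; lra).
  assert (Hha : h <= x0 - a) by apply Rmin_l.
  assert (Hhb : h <= b - x0) by apply Rmin_r.
  set (K := Rabs (g (x0 + h) - g x0) + Rabs (g x0 - g (x0 - h))).
  assert (HK : 0 <= K) by (unfold K; pose proof (Rabs_pos (g (x0 + h) - g x0));
                           pose proof (Rabs_pos (g x0 - g (x0 - h))); lra).
  intros eps Heps.
  exists (Rmin h (eps * h / (K + 1))); split.
  { apply Rmin_pos; [lra|]. apply Rdiv_lt_0_compat; nra. }
  intros x [_ Hx]; simpl in *; unfold R_dist in *.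
  pose proof (Rmin_l h (eps * h / (K + 1))); pose proof (Rmin_r h (eps * h / (K + 1))).
  pose proof (convex_on_lipschitz_near x0 h x Hh ltac:(lra) ltac:(lra) ltac:(lra)) as HL.
  fold K in HL.
  assert ((K + 1) * Rabs (x - x0) < eps * h).
  { apply Rlt_le_trans with ((K + 1) * (eps * h / (K + 1))).
    - apply Rmult_lt_compat_l; lra.
    - right; field; lra. }
  pose proof (Rabs_pos (x - x0)); nra.
Qed.

End Convex.

Lemma convex_on_ex_RInt (a b : R) (g : R -> R) :
  a < b -> convex_on a b g -> ex_RInt g a b.
Proof.
  intros Hab Hg.
  destruct (convex_on_bounded a b g Hg) as [M HM].
  apply ex_RInt_Reals_1, Riemann_integrable_bounded_interior with M; auto.
  intros c d Hac Hcd Hdb.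
  apply continuity_implies_RiemannInt; [exact Hcd|].
  intros x Hx; apply convex_on_continuity_pt with a b; [exact Hg | lra].
Qed.

Lemma convex_on_is_RInt (a b : R) (g : R -> R) :
  a < b -> convex_on a b g -> is_RInt g a b (RInt g a b).
Proof. intros Hab Hg; exact (RInt_correct _ _ _ (convex_on_ex_RInt a b g Hab Hg)). Qed.

Lemma Rint_RInt (g : R -> R) (a b : R) : ex_RInt g a b -> Rint g a b = RInt g a b.
Proof.
  intros H; unfold Rint.
  destruct (excluded_middle_informative _) as [h|h].
  - rewrite (RInt_Reals g a b (epsilon h (fun _ => True))); reflexivity.
  - exfalso; apply h; constructor; apply ex_RInt_Reals_0; exact H.
Qed.

Lemma Rint_plus (g1 g2 : R -> R) (a b : R) : ex_RInt g1 a b -> ex_RInt g2 a b ->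
  Rint (fun x => g1 x + g2 x) a b = Rint g1 a b + Rint g2 a b.
Proof.
  intros H1 H2.
  rewrite !Rint_RInt by (auto; apply (ex_RInt_plus g1 g2); auto).
  exact (RInt_plus g1 g2 a b H1 H2).
Qed.

Lemma is_RInt_reflect (g : R -> R) (a b l : R) :
  is_RInt g a b l -> is_RInt (fun x => g (a + b - x)) a b l.
Proof.
  intros H.
  assert (H' : @is_RInt R_NormedModule g (-1 * a + (a + b)) (-1 * b + (a + b)) (opp l)).
  { replace (-1 * a + (a + b)) with b by ring; replace (-1 * b + (a + b)) with a by ring.
    exact (is_RInt_swap g b a l H). }
  apply is_RInt_comp_lin in H'.
  apply is_RInt_opp in H'.
  rewrite opp_opp in H'.
  eapply is_RInt_ext; [|exact H'].
  intros x _; change (- (-1 * g (-1 * x + (a + b))) = g (a + b - x)).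
  replace (-1 * x + (a + b)) with (a + b - x) by ring; ring.
Qed.

Lemma hermite_hadamard (p q : R) (g : R -> R) : p < q -> convex_on p q g ->
  (q - p) * g ((p + q) / 2) <= RInt g p q <= (q - p) * ((g p + g q) / 2).
Proof.
  intros Hpq Hg.
  pose proof (convex_on_is_RInt p q g Hpq Hg) as Ig.
  (* Pair [x] with its mirror image [p + q - x]: the midpoint lies between them and the
     reflection does not change the integral. *)
  assert (Is : is_RInt (fun x => g x + g (p + q - x)) p q (2 * RInt g p q)).
  { replace (2 * RInt g p q) with (plus (RInt g p q) (RInt g p q))
      by (unfold plus; simpl; ring).
    exact (is_RInt_plus _ _ _ _ _ _ Ig (is_RInt_reflect g p q _ Ig)). }
  assert (Ic : forall c : R, is_RInt (fun _ => c) p q ((q - p) * c))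
    by (intros c; exact (is_RInt_const p q c)).
  split.
  - apply Rmult_le_reg_l with 2; [lra|].
    replace (2 * ((q - p) * g ((p + q) / 2))) with ((q - p) * (2 * g ((p + q) / 2))) by ring.
    apply (is_RInt_le _ _ p q _ _ ltac:(lra) (Ic _) Is).
    intros x Hx.
    pose proof (Hg x (p + q - x) (/ 2) ltac:(lra) ltac:(lra) ltac:(lra)) as H.
    replace (/ 2 * x + (1 - / 2) * (p + q - x)) with ((p + q) / 2) in H by field.
    lra.
  - apply Rmult_le_reg_l with 2; [lra|].
    replace (2 * ((q - p) * ((g p + g q) / 2))) with ((q - p) * (g p + g q)) by field.
    apply (is_RInt_le _ _ p q _ _ ltac:(lra) Is (Ic _)).
    intros x Hx.
    pose proof (convex_on_chord p q g Hg p x q ltac:(lra) ltac:(lra) ltac:(lra) ltac:(lra)).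
    pose proof (convex_on_chord p q g Hg p (p + q - x) q
                  ltac:(lra) ltac:(lra) ltac:(lra) ltac:(lra)).
    nra.
Qed.

Lemma sumk_ext (m : nat) (F G : nat -> R) :
  (forall k, (1 <= k <= m)%nat -> F k = G k) -> sumk m F = sumk m G.
Proof.
  induction m as [|m IH]; intros H; simpl; [reflexivity|].
  rewrite IH by (intros; apply H; lia); rewrite H by lia; reflexivity.
Qed.

Lemma sumk_le (m : nat) (F G : nat -> R) :
  (forall k, (1 <= k <= m)%nat -> F k <= G k) -> sumk m F <= sumk m G.
Proof.
  induction m as [|m IH]; intros H; simpl; [lra|].
  pose proof (IH ltac:(intros; apply H; lia)); pose proof (H (S m) ltac:(lia)); lra.
Qed.

Lemma sumk_scal (m : nat) (c : R) (F : nat -> R) :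
  sumk m (fun k => c * F k) = c * sumk m F.
Proof. induction m as [|m IH]; simpl; [ring | rewrite IH; ring]. Qed.

Lemma sumk_consecutive (m : nat) (u : nat -> R) : (1 <= m)%nat ->
  sumk m (fun k => u (k - 1)%nat + u k) = u 0%nat + u m + 2 * sumk (m - 1) u.
Proof.
  intros Hm; induction m as [|m IH]; [lia|].
  destruct m as [|m]; [simpl; ring|].
  change (sumk (S (S m)) (fun k => u (k - 1)%nat + u k))
    with (sumk (S m) (fun k => u (k - 1)%nat + u k) + (u (S m) + u (S (S m)))).
  rewrite IH by lia.
  change (sumk (S (S m) - 1) u) with (sumk m u + u (S m)).
  replace (S m - 1)%nat with m by lia; ring.
Qed.

Lemma is_RInt_sumk (m : nat) (F : nat -> R -> R) (a b : R) :
  (forall k, (1 <= k <= m)%nat -> ex_RInt (F k) a b) ->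
  is_RInt (fun x => sumk m (fun k => F k x)) a b (sumk m (fun k => RInt (F k) a b)).
Proof.
  induction m as [|m IH]; intros H; simpl.
  - pose proof (is_RInt_const a b 0) as H0.
    change (is_RInt (fun _ => 0) a b ((b - a) * 0)) in H0.
    rewrite Rmult_0_r in H0; exact H0.
  - apply (is_RInt_plus _ _ _ _ _ _ (IH ltac:(intros; apply H; lia))).
    exact (RInt_correct _ _ _ (H (S m) ltac:(lia))).
Qed.

Definition grid_point (p q : R) (n k : nat) : R := p + INR k * ((q - p) / INR n).

Section Grid.

Variables (p q : R) (n : nat).
Hypotheses (Hpq : p < q) (Hn : (1 <= n)%nat).

Let HN : 0 < INR n.
Proof. apply lt_0_INR; lia. Qed.

Lemma grid_point_0 : grid_point p q n 0 = p.
Proof. unfold grid_point; simpl; ring. Qed.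

Lemma grid_point_last : grid_point p q n n = q.
Proof. unfold grid_point; field; lra. Qed.

Lemma grid_point_pred k : (1 <= k)%nat ->
  grid_point p q n k = grid_point p q n (k - 1) + (q - p) / INR n.
Proof. intros Hk; unfold grid_point; rewrite minus_INR by lia; simpl; ring. Qed.

Lemma grid_point_bounds k : (k <= n)%nat -> p <= grid_point p q n k <= q.
Proof.
  intros Hk; unfold grid_point.
  pose proof (pos_INR k); apply le_INR in Hk.
  assert (0 < (q - p) / INR n) by (apply Rdiv_lt_0_compat; lra).
  split; [nra|].
  apply Rle_trans with (p + INR n * ((q - p) / INR n)); [nra | right; field; lra].
Qed.

Lemma RInt_grid_sum (g : R -> R) m : (m <= n)%nat -> ex_RInt g p q ->
  RInt g p (grid_point p q n m) =
  sumk m (fun k => RInt g (grid_point p q n (k - 1)) (grid_point p q n k)).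
Proof.
  intros Hm Hg; induction m as [|m IH]; simpl.
  - rewrite grid_point_0; exact (RInt_point p g).
  - rewrite <- IH by lia; rewrite Nat.sub_0_r.
    pose proof (grid_point_bounds m ltac:(lia)).
    pose proof (grid_point_bounds (S m) Hm).
    pose proof (grid_point_pred (S m) ltac:(lia)) as Hstep.
    replace (S m - 1)%nat with m in Hstep by lia.
    assert (0 < (q - p) / INR n) by (apply Rdiv_lt_0_compat; lra).
    symmetry; apply (RInt_Chasles g p (grid_point p q n m) (grid_point p q n (S m))).
    + apply ex_RInt_Chasles_1 with q; [lra | exact Hg].
    + apply ex_RInt_Chasles_2 with p; [lra|].
      apply ex_RInt_Chasles_1 with q; [lra | exact Hg].
Qed.

Lemma hermite_hadamard_cell (g : R -> R) k : convex_on p q g -> (1 <= k <= n)%nat ->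
  let u := grid_point p q n (k - 1) in
  let v := grid_point p q n k in
  (q - p) / INR n * g ((u + v) / 2) <= RInt g u v <= (q - p) / INR n * ((g u + g v) / 2).
Proof.
  intros Hg Hk u v.
  pose proof (grid_point_bounds k ltac:(lia)).
  pose proof (grid_point_bounds (k - 1) ltac:(lia)).
  pose proof (grid_point_pred k ltac:(lia)).
  assert (0 < (q - p) / INR n) by (apply Rdiv_lt_0_compat; lra).
  replace ((q - p) / INR n) with (v - u) by (unfold u, v; lra).
  apply hermite_hadamard; [unfold u, v; lra|].
  apply convex_on_sub with p q; [exact Hg | unfold u, v; lra ..].
Qed.

Lemma hermite_hadamard_grid (g : R -> R) : convex_on p q g ->
  (q - p) / INR n *
      sumk n (fun k => g ((grid_point p q n (k - 1) + grid_point p q n k) / 2))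
    <= Rint g p q /\
  Rint g p q <= (q - p) / (2 * INR n) * (g p + g q)
                + (q - p) / INR n * sumk (n - 1) (fun k => g (grid_point p q n k)).
Proof.
  intros Hg.
  rewrite Rint_RInt by (apply convex_on_ex_RInt; auto).
  replace (RInt g p q) with (RInt g p (grid_point p q n n))
    by (rewrite grid_point_last; reflexivity).
  rewrite RInt_grid_sum by (auto; apply convex_on_ex_RInt; auto).
  split.
  - rewrite <- sumk_scal; apply sumk_le; intros k Hk; apply (hermite_hadamard_cell g k Hg Hk).
  - eapply Rle_trans; [apply sumk_le; intros k Hk; apply (hermite_hadamard_cell g k Hg Hk)|].
    rewrite (sumk_ext n _ (fun k => (q - p) / (2 * INR n) *
               (g (grid_point p q n (k - 1)) + g (grid_point p q n k))))
      by (intros; field; lra).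
    rewrite sumk_scal, (sumk_consecutive n (fun k => g (grid_point p q n k)) Hn).
    rewrite grid_point_0, grid_point_last.
    replace ((q - p) / INR n) with (2 * ((q - p) / (2 * INR n))) by (field; lra).
    right; ring.
Qed.

End Grid.

Lemma convex_on_Rint_param (a b c d : R) (f : R -> R -> R) :
  c < d -> convex_on_coordinates a b c d f ->
  convex_on a b (fun x => Rint (fun y => f x y) c d).
Proof.
  intros Hcd [Fx Fy] u v t Hu Hv Ht.
  assert (Hw : a <= t * u + (1 - t) * v <= b) by nra.
  assert (I : forall x, a <= x <= b -> is_RInt (fun y => f x y) c d (RInt (fun y => f x y) c d))
    by (intros; apply convex_on_is_RInt; auto).
  rewrite !Rint_RInt by (apply convex_on_ex_RInt; auto).
  refine (is_RInt_le _ (fun y => t * f u y + (1 - t) * f v y) c d _ _ ltac:(lra) (I _ Hw)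
            (is_RInt_plus _ _ _ _ _ _ (is_RInt_scal _ _ _ t _ (I u Hu))
                                      (is_RInt_scal _ _ _ (1 - t) _ (I v Hv))) _).
  intros y Hy; apply (Fx y); auto; lra.
Qed.

Lemma hermite_hadamard_grid_inner (a b c d : R) (f : R -> R -> R) (n : nat) :
  a < b -> c < d -> (1 <= n)%nat -> convex_on_coordinates a b c d f ->
  let y := grid_point c d n in
  let I := Rint (fun x => Rint (fun v => f x v) c d) a b in
  (d - c) / INR n * sumk n (fun k => Rint (fun x => f x ((y (k - 1)%nat + y k) / 2)) a b)
    <= I /\
  I <= (d - c) / (2 * INR n) * Rint (fun x => f x c + f x d) a b
       + (d - c) / INR n * sumk (n - 1) (fun k => Rint (fun x => f x (y k)) a b).
Proof.
  intros Hab Hcd Hn Hf y I.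
  pose proof Hf as [Fx Fy].
  assert (Ih : is_RInt (fun x => Rint (fun v => f x v) c d) a b I).
  { unfold I; rewrite Rint_RInt by (apply convex_on_ex_RInt, convex_on_Rint_param; auto).
    apply convex_on_is_RInt, convex_on_Rint_param; auto. }
  assert (Ex : forall v, c <= v <= d -> ex_RInt (fun x => f x v) a b)
    by (intros; apply convex_on_ex_RInt; auto).
  assert (Hy : forall k, (k <= n)%nat -> c <= y k <= d)
    by (intros; apply grid_point_bounds; auto).
  assert (Hmid : forall k, (1 <= k <= n)%nat -> c <= (y (k - 1)%nat + y k) / 2 <= d).
  { intros k Hk; pose proof (Hy k ltac:(lia)); pose proof (Hy (k - 1)%nat ltac:(lia)); lra. }
  rewrite (sumk_ext n _ (fun k => RInt (fun x => f x ((y (k - 1)%nat + y k) / 2)) a b))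
    by (intros; apply Rint_RInt, Ex, Hmid; auto).
  rewrite (sumk_ext (n - 1) _ (fun k => RInt (fun x => f x (y k)) a b))
    by (intros; apply Rint_RInt, Ex, Hy; lia).
  rewrite Rint_RInt by (apply (ex_RInt_plus (fun x => f x c) (fun x => f x d)); apply Ex; lra).
  split.
  - refine (is_RInt_le _ _ a b _ _ (Rlt_le _ _ Hab)
      (is_RInt_scal _ _ _ ((d - c) / INR n) _
         (is_RInt_sumk n (fun k x => f x ((y (k - 1)%nat + y k) / 2)) a b _)) Ih _).
    + intros k Hk; apply Ex, Hmid; auto.
    + intros x Hx; apply (hermite_hadamard_grid c d n Hcd Hn (fun v => f x v)), Fy; lra.
  - refine (is_RInt_le _ _ a b _ _ (Rlt_le _ _ Hab) Ih
      (is_RInt_plus _ _ _ _ _ _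
         (is_RInt_scal _ _ _ ((d - c) / (2 * INR n)) _
            (RInt_correct _ _ _ (ex_RInt_plus (fun x => f x c) (fun x => f x d) a b
                                   (Ex c ltac:(lra)) (Ex d ltac:(lra)))))
         (is_RInt_scal _ _ _ ((d - c) / INR n) _
            (is_RInt_sumk (n - 1) (fun k x => f x (y k)) a b _))) _).
    + intros k Hk; apply Ex, Hy; lia.
    + intros x Hx; apply (hermite_hadamard_grid c d n Hcd Hn (fun v => f x v)), Fy; lra.
Qed.

Theorem theorem3 (a b c d : R) (f : R -> R -> R) (n : nat)
  (hab : a < b) (hcd : c < d) (hf : convex_on_coordinates a b c d f)
  (hn : (1 <= n)%nat) :
  let xk := fun k : nat => a + INR k * ((b - a) / INR n) in
  let yk := fun k : nat => c + INR k * ((d - c) / INR n) in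
  let I2 := Rint (fun x => Rint (fun y => f x y) c d) a b in
  (d - c) / (2 * INR n) *
      sumk n (fun k => Rint (fun x => f x ((yk (k - 1)%nat + yk k) / 2)) a b)
  + (b - a) / (2 * INR n) *
      sumk n (fun k => Rint (fun y => f ((xk (k - 1)%nat + xk k) / 2) y) c d)
  <= I2
  /\
  I2 <=
    (d - c) / (4 * INR n) * Rint (fun x => f x c + f x d) a b
  + (b - a) / (4 * INR n) * Rint (fun y => f a y + f b y) c d
  + (d - c) / (2 * INR n) * sumk (n - 1) (fun k => Rint (fun x => f x (yk k)) a b)
  + (b - a) / (2 * INR n) * sumk (n - 1) (fun k => Rint (fun y => f (xk k) y) c d).
Proof.
  pose proof hf as [_ Fy].
  pose proof (hermite_hadamard_grid a b n hab hn _ (convex_on_Rint_param a b c d f hcd hf))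
    as [Hx_low Hx_up].
  pose proof (hermite_hadamard_grid_inner a b c d f n hab hcd hn hf) as Hy; cbv zeta in Hy.
  destruct Hy as [Hy_low Hy_up].
  rewrite (Rint_plus (fun y => f a y) (fun y => f b y))
    by (apply convex_on_ex_RInt, Fy; lra).
  unfold grid_point in *; cbv beta zeta in *.
  assert (HN : 0 < INR n) by (apply lt_0_INR; lia).
  replace ((d - c) / (2 * INR n)) with ((d - c) / INR n / 2) in * by (field; lra).
  replace ((b - a) / (2 * INR n)) with ((b - a) / INR n / 2) in * by (field; lra).
  replace ((d - c) / (4 * INR n)) with ((d - c) / INR n / 4) by (field; lra).
  replace ((b - a) / (4 * INR n)) with ((b - a) / INR n / 4) by (field; lra).
  split; lra.
Qed.
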